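(* Let $E\subseteq\mathbb{C}$ be a finite Galois extension of $\mathbb{Q}$ and let $\mathfrak{n}^{\mathbb{Q}}$ be a finite-dimensional rational Lie algebra with a decomposition into $\mathbb{Q}$-subspaces $\mathfrak{n}^{\mathbb{Q}}=\bigoplus_{\lambda\in E\setminus\{0\}}V_\lambda$ (finitely many nonzero) such that $[V_\lambda,V_\mu]\subseteq V_{\lambda\mu}$ for all $\lambda,\mu$. Let $\rho:\mathrm{Gal}(E,\mathbb{Q})\to\mathrm{Aut}(\mathfrak{n}^{\mathbb{Q}})$ be a representation with $\rho_\sigma(V_\lambda)=V_{\sigma(\lambda)}$ for all $\sigma$ and $\lambda$. Let $f:\mathfrak{n}^E\to\mathfrak{n}^E$ be the $E$-linear map with $f(X)=\lambda X$ for all $X\in V_\lambda$. Then $f$ is a Lie algebra automorphism and there is a rational form $\mathfrak{m}^{\mathbb{Q}}\subseteq\mathfrak{n}^E$ with $f(\mathfrak{m}^{\mathbb{Q}})=\mathfrak{m}^{\mathbb{Q}}$. If every $\lambda$ with $V_\lambda\neq 0$ is an algebraic unit of absolute value different from $1$, then $\mathfrak{m}^{\mathbb{Q}}$ is Anosov.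
   Context: $\mathfrak{n}^E=E\otimes_{\mathbb{Q}}\mathfrak{n}^{\mathbb{Q}}$. A rational form of $\mathfrak{n}^E$ is a rational Lie subalgebra $\mathfrak{m}^{\mathbb{Q}}\subseteq\mathfrak{n}^E$ such that a $\mathbb{Q}$-basis of $\mathfrak{m}^{\mathbb{Q}}$ is an $E$-basis of $\mathfrak{n}^E$. An automorphism of a Lie algebra over a field $F\subseteq\mathbb{C}$ is Anosov if it is hyperbolic (no eigenvalue of absolute value $1$) and integer-like (characteristic polynomial with integer coefficients and determinant of absolute value $1$). A rational Lie algebra is Anosov if it admits an Anosov automorphism. *)

From HB Require Import structures.
From mathcomp Require Import all_boot all_order all_algebra all_fingroup all_field.
Set Implicit Arguments. Unset Strict Implicit. Unset Printing Implicit Defensive.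
Import Order.TTheory GRing.Theory Num.Theory.
Local Open Scope ring_scope.

(* A d-dimensional rational Lie algebra is presented (after choosing a basis)
   as Q^d = 'rV[rat]_d with structure constants c i j = [e_i, e_j].
   The bracket, extended bilinearly to R^d for any ring R containing Q
   (in particular to n^E = E (x)_Q n^Q = E^d), is: *)
Definition lie_br (R : unitRingType) (d : nat) (c : 'I_d -> 'I_d -> 'rV[rat]_d)
  (x y : 'rV[R]_d) : 'rV[R]_d :=
  \sum_(i < d) \sum_(j < d) (x 0 i * y 0 j) *: map_mx ratr (c i j).

Definition is_lie (d : nat) (c : 'I_d -> 'I_d -> 'rV[rat]_d) : Prop :=
  (forall x : 'rV[rat]_d, lie_br c x x = 0) /\
  (forall x y z : 'rV[rat]_d,
      lie_br c x (lie_br c y z) + lie_br c y (lie_br c z x)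
      + lie_br c z (lie_br c x y) = 0).

Definition lie_aut (d : nat) (c : 'I_d -> 'I_d -> 'rV[rat]_d) (A : 'M[rat]_d) : Prop :=
  A \in unitmx /\
  forall x y : 'rV[rat]_d, lie_br c (x *m A) (y *m A) = lie_br c x y *m A.

Definition lie_autE (E : fieldType) (d : nat) (c : 'I_d -> 'I_d -> 'rV[rat]_d)
  (F : 'M[E]_d) : Prop :=
  F \in unitmx /\
  forall x y : 'rV[E]_d, lie_br c (x *m F) (y *m F) = lie_br c x y *m F.

Definition ratv (E : fieldType) (d : nat) (a : 'rV[rat]_d) : 'rV[E]_d := map_mx ratr a.

Definition in_Qspan (E : fieldType) (d : nat) (B : 'M[E]_d) (v : 'rV[E]_d) : Prop :=
  exists a : 'rV[rat]_d, v = ratv E a *m B.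

(* m^Q := Q-span of the rows of B is a rational form of n^E:
   the rows of B form an E-basis of E^d (B invertible), and
   m^Q is a rational Lie subalgebra (closed under the bracket).
   (The rows are then automatically Q-linearly independent, so they are a
   Q-basis of m^Q which is an E-basis of n^E.) *)
Definition rational_form (E : fieldType) (d : nat) (c : 'I_d -> 'I_d -> 'rV[rat]_d)
  (B : 'M[E]_d) : Prop :=
  B \in unitmx /\
  forall u v : 'rV[E]_d, in_Qspan B u -> in_Qspan B v -> in_Qspan B (lie_br c u v).

Definition stabilizes (E : fieldType) (d : nat) (B F : 'M[E]_d) : Prop :=
  (forall u, in_Qspan B u -> in_Qspan B (u *m F)) /\
  (forall v, in_Qspan B v -> exists u, in_Qspan B u /\ v = u *m F).

(* Anosov automorphism of a rational Lie algebra given by a d x d rational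
   matrix A (in some Q-basis): Lie automorphism, integer-like (characteristic
   polynomial with integer coefficients, |det| = 1) and hyperbolic (no complex
   eigenvalue of absolute value 1). *)
Definition anosov_mx (d : nat) (A : 'M[rat]_d) : Prop :=
  char_poly A \is a polyOver Num.int /\
  (\det A = 1 \/ \det A = -1) /\
  (forall z : algC, root (map_poly ratr (char_poly A)) z -> `|z| != 1).

(* The rational Lie algebra m^Q (Q-span of the rows of B, with the bracket
   inherited from n^E) is Anosov: it admits a Q-linear Lie algebra
   automorphism, written as the matrix A in the Q-basis given by the rows of
   B, which is Anosov. *)
Definition anosov_form (E : fieldType) (d : nat) (c : 'I_d -> 'I_d -> 'rV[rat]_d)
  (B : 'M[E]_d) : Prop :=
  exists A : 'M[rat]_d,
    A \in unitmx /\
    (forall a b e : 'rV[rat]_d,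
        lie_br c (ratv E a *m B) (ratv E b *m B) = ratv E e *m B ->
        lie_br c (ratv E (a *m A) *m B) (ratv E (b *m A) *m B)
          = ratv E (e *m A) *m B) /\
    anosov_mx A.

Definition alg_unit (z : algC) : bool := (z != 0) && (z \in Aint) && (z^-1 \in Aint).

From HB Require Import structures.
From mathcomp Require Import all_boot all_order all_algebra all_fingroup all_field.
From mathcomp Require Import ring.
Set Implicit Arguments. Unset Strict Implicit. Unset Printing Implicit Defensive.
Import Order.TTheory GRing.Theory Num.Theory.
Local Open Scope ring_scope.

(* The proof has three parts.
   1. f is a Lie automorphism of n^E: n^E is E-spanned by the V_l, and on
      X in V_l, Y in V_m both f[X,Y] and [fX,fY] equal lm[X,Y] (the bracket
      is bilinear and V_l V_m lies in V_(lm)).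
   2. Galois descent.  g in Gal(E/Q) acts semilinearly on n^E by
      X |-> g(X) rho(g).  Since E/Q is Galois, Dedekind's independence of
      characters yields an E-basis B of fixed vectors, and the fixed vectors are
      exactly the Q-span m^Q of B.  The action respects the bracket, hence m^Q
      is a rational form; it commutes with f (rho(g) maps V_l onto V_(g l)),
      hence f(m^Q) = m^Q and f|m^Q has a rational matrix A with B F = A B.
   3. The characteristic polynomial of A has roots iota(l), V_l != 0; if they
      are algebraic units off the unit circle, it is integral with constant
      term +-1, so A is an Anosov automorphism of m^Q. *)

Section LieBracket.
Variables (R : comUnitRingType) (d : nat) (c : 'I_d -> 'I_d -> 'rV[rat]_d).

Lemma lie_brE (x y : 'rV[R]_d) k :
  lie_br c x y 0 k = \sum_i \sum_j x 0 i * y 0 j * ratr (c i j 0 k).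
Proof.
rewrite /lie_br summxE; apply: eq_bigr => i _; rewrite summxE.
by apply: eq_bigr => j _; rewrite !mxE.
Qed.

Lemma lie_brDl (x1 x2 y : 'rV[R]_d) :
  lie_br c (x1 + x2) y = lie_br c x1 y + lie_br c x2 y.
Proof.
apply/rowP => k; rewrite mxE !lie_brE -big_split; apply: eq_bigr => i _.
by rewrite -big_split; apply: eq_bigr => j _; rewrite !mxE /=; ring.
Qed.

Lemma lie_brDr (x y1 y2 : 'rV[R]_d) :
  lie_br c x (y1 + y2) = lie_br c x y1 + lie_br c x y2.
Proof.
apply/rowP => k; rewrite mxE !lie_brE -big_split; apply: eq_bigr => i _.
by rewrite -big_split; apply: eq_bigr => j _; rewrite !mxE /=; ring.
Qed.

Lemma lie_brZl (a : R) (x y : 'rV[R]_d) : lie_br c (a *: x) y = a *: lie_br c x y.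
Proof.
apply/rowP => k; rewrite mxE !lie_brE mulr_sumr; apply: eq_bigr => i _.
by rewrite mulr_sumr; apply: eq_bigr => j _; rewrite !mxE /=; ring.
Qed.

Lemma lie_brZr (a : R) (x y : 'rV[R]_d) : lie_br c x (a *: y) = a *: lie_br c x y.
Proof.
apply/rowP => k; rewrite mxE !lie_brE mulr_sumr; apply: eq_bigr => i _.
by rewrite mulr_sumr; apply: eq_bigr => j _; rewrite !mxE /=; ring.
Qed.

Lemma lie_br0l (y : 'rV[R]_d) : lie_br c 0 y = 0.
Proof. by have := lie_brZl 0 0 y; rewrite !scale0r. Qed.

Lemma lie_br0r (y : 'rV[R]_d) : lie_br c y 0 = 0.
Proof. by have := lie_brZr 0 y 0; rewrite !scale0r. Qed.

End LieBracket.

(* The bracket is defined over Q, so ring morphisms commute with it. *)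
Lemma lie_br_map (aR : fieldType) (rR : comUnitRingType) (f : {rmorphism aR -> rR})
    d (c : 'I_d -> 'I_d -> 'rV[rat]_d) (x y : 'rV[aR]_d) :
  map_mx f (lie_br c x y) = lie_br c (map_mx f x) (map_mx f y).
Proof.
apply/rowP => k; rewrite mxE !lie_brE rmorph_sum; apply: eq_bigr => i _.
rewrite rmorph_sum; apply: eq_bigr => j _.
by rewrite !mxE [f (_ * ratr _)]rmorphM fmorph_rat rmorphM.
Qed.

Section ExtensionOfScalars.
Variables (E : fieldExtType rat) (d : nat).

Lemma ratv_alg m n (x : 'M[rat]_(m, n)) : map_mx ratr x = map_mx (in_alg E) x.
Proof. by apply/matrixP => i j; rewrite !mxE (fmorph_eq_rat (in_alg E)). Qed.

Lemma ratv_br (c : 'I_d -> 'I_d -> 'rV[rat]_d) (a b : 'rV[rat]_d) :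
  lie_br c (ratv E a) (ratv E b) = ratv E (lie_br c a b).
Proof. by rewrite /ratv !ratv_alg lie_br_map. Qed.

Variables (V : E -> 'M[rat]_d) (s : seq E).
Hypothesis Vsum : (\sum_(l <- s) V l :=: 1%:M)%MS.

Lemma span_ind (P : 'rV[E]_d -> Prop) :
  P 0 -> (forall u v, P u -> P v -> P (u + v)) ->
  (forall a u, P u -> P (a *: u)) ->
  (forall l x, (x <= V l)%MS -> P (ratv E x)) -> forall v, P v.
Proof.
move=> P0 PD PZ Pgen.
have Psum I (r : seq I) (Q : pred I) G :
    (forall i, Q i -> P (G i)) -> P (\sum_(i <- r | Q i) G i).
  by move=> PG; apply: (big_ind P).
have Prat (x : 'rV[rat]_d) : P (ratv E x).
  have : (x <= \sum_(l <- s) V l)%MS by rewrite Vsum submx1.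
  rewrite (big_nth 0) big_mkord => /sub_sumsmxP[u_ ->].
  rewrite /ratv ratv_alg map_mx_sum; apply: Psum => k _; rewrite -ratv_alg.
  by apply: (Pgen (nth 0 s k)); apply: submxMl.
move=> v; rewrite (row_sum_delta v); apply: Psum => j _; apply: PZ.
by rewrite -(map_delta_mx (in_alg E)) -ratv_alg; apply: Prat.
Qed.

Lemma lie_br_mulmx_span (c : 'I_d -> 'I_d -> 'rV[rat]_d) (M : 'M[E]_d) :
  (forall l m x y, (x <= V l)%MS -> (y <= V m)%MS ->
     lie_br c (ratv E x *m M) (ratv E y *m M) = lie_br c (ratv E x) (ratv E y) *m M) ->
  forall x y : 'rV[E]_d, lie_br c (x *m M) (y *m M) = lie_br c x y *m M.
Proof.
move=> Mgen x y; elim/span_ind: x => [|u v Hu Hv|a u Hu|l x Hx].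
- by rewrite mul0mx !lie_br0l mul0mx.
- by rewrite mulmxDl !lie_brDl Hu Hv mulmxDl.
- by rewrite -scalemxAl !lie_brZl Hu scalemxAl.
elim/span_ind: y => [|u v Hu Hv|a u Hu|m y Hy].
- by rewrite mul0mx !lie_br0r mul0mx.
- by rewrite mulmxDl !lie_brDr Hu Hv mulmxDl.
- by rewrite -scalemxAl !lie_brZr Hu scalemxAl.
exact: Mgen Hx Hy.
Qed.

End ExtensionOfScalars.

Lemma lie_br_mulmx_rat (E : fieldExtType rat) d (c : 'I_d -> 'I_d -> 'rV[rat]_d)
    (A : 'M[rat]_d) :
  (forall x y : 'rV[rat]_d, lie_br c (x *m A) (y *m A) = lie_br c x y *m A) ->
  forall x y : 'rV[E]_d,
    lie_br c (x *m map_mx ratr A) (y *m map_mx ratr A)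
      = lie_br c x y *m map_mx ratr A.
Proof.
move=> Abr; apply: (@lie_br_mulmx_span E d (fun=> 1%:M) [:: 1]).
  by rewrite big_seq1.
move=> _ _ x y _ _.
by rewrite /ratv !ratv_alg -!map_mxM -!lie_br_map Abr map_mxM.
Qed.

Section EigenvalueMap.
Variables (E : fieldExtType rat) (d : nat) (c : 'I_d -> 'I_d -> 'rV[rat]_d).
Variables (V : E -> 'M[rat]_d) (s : seq E) (F : 'M[E]_d).
Hypotheses (s_neq0 : 0 \notin s) (V_supp : forall l, l \notin s -> V l = 0).
Hypothesis Vsum : (\sum_(l <- s) V l :=: 1%:M)%MS.
Hypothesis F_eigen : forall l x, (x <= V l)%MS -> ratv E x *m F = l *: ratv E x.

(* f is invertible: each spanning vector X in V_l is l^-1 f(X), l != 0. *)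
Lemma eigen_map_unit : F \in unitmx.
Proof.
rewrite -row_full_unit -sub1mx; apply/row_subP => i; rewrite row1.
elim/(span_ind Vsum): (delta_mx 0 i) => [|u v|a u|l x Vx].
- exact: sub0mx.
- exact: addmx_sub.
- exact: scalemx_sub.
have [ls|/V_supp Vl0] := boolP (l \in s); last first.
  by move: Vx; rewrite Vl0 submx0 => /eqP ->; rewrite /ratv ratv_alg map_mx0 sub0mx.
have l_neq0 : l != 0 by apply: contraNneq s_neq0 => <-.
have -> : ratv E x = l^-1 *: (ratv E x *m F).
  by rewrite (F_eigen Vx) scalerA mulVf // scale1r.
exact/scalemx_sub/submxMl.
Qed.

(* f respects the bracket: on X in V_l, Y in V_m both sides equal lm[X,Y]. *)
Lemma eigen_map_br :
  (forall l m x y, (x <= V l)%MS -> (y <= V m)%MS -> (lie_br c x y <= V (l * m))%MS) ->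
  forall x y : 'rV[E]_d, lie_br c (x *m F) (y *m F) = lie_br c x y *m F.
Proof.
move=> Vbr; apply: (lie_br_mulmx_span Vsum) => l m x y Vx Vy.
rewrite (F_eigen Vx) (F_eigen Vy) lie_brZl lie_brZr ratv_br (F_eigen (Vbr _ _ _ _ Vx Vy)).
by rewrite scalerA mulrC.
Qed.

End EigenvalueMap.

Lemma galois_over_rat (E : splittingFieldType rat) : galois 1%AS {:E}.
Proof.
apply/and3P; split; first exact: sub1v.
  apply/separableP => y _; apply: pcharf0_separable.
  by move=> p; rewrite pchar_lalg (pchar_num rat).
exact: normalFieldf.
Qed.

Lemma gal_fixed_rat (E : splittingFieldType rat) (e : E) :
  (forall g : gal_of {:E}, g e = e) -> exists q : rat, e = ratr q.
Proof.
move=> e_fixed; have : e \in (1%AS : {subfield E}).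
  rewrite -(galois_fixedField (galois_over_rat E)).
  by apply/fixedFieldP; [exact: memvf | move=> g _; exact: e_fixed].
by case/vlineP => q ->; exists q; rewrite -(fmorph_eq_rat (in_alg E)).
Qed.

Lemma gal_fixed_rat_mx (E : splittingFieldType rat) m n (X : 'M[E]_(m, n)) :
  (forall g : gal_of {:E}, map_mx g X = X) ->
  exists A : 'M[rat]_(m, n), X = map_mx ratr A.
Proof.
move=> X_fixed; have entry_rat i j : exists q : rat, X i j == ratr q.
  have /gal_fixed_rat[q ->] : forall g : gal_of {:E}, g (X i j) = X i j.
    by move=> g; have /matrixP/(_ i j) := X_fixed g; rewrite mxE.
  by exists q.
exists (\matrix_(i, j) xchoose (entry_rat i j)); apply/matrixP => i j.
by rewrite !mxE; apply/eqP; exact: (xchooseP (entry_rat i j)).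
Qed.

Lemma map_gal_ratr (E : splittingFieldType rat) (g : gal_of {:E}) m n
    (a : 'M[rat]_(m, n)) :
  map_mx g (map_mx ratr a) = map_mx ratr a.
Proof. by apply/matrixP => i j; rewrite !mxE fmorph_rat. Qed.

Section GaloisDescent.
Variables (E : splittingFieldType rat) (d : nat) (rho : gal_of {:E} -> 'M[rat]_d).
Hypothesis rho_mul : forall g h, rho (g * h)%g = rho g *m rho h.
Hypothesis rho_unit : forall g, rho g \in unitmx.

(* The twisted (semilinear) Galois action on n^E = E (x)_Q n^Q, applied to
   each row of X: g acts on the coefficients in E and rho g on n^Q. *)
Definition gal_act (g : gal_of {:E}) m (X : 'M[E]_(m, d)) : 'M[E]_(m, d) :=
  map_mx g X *m map_mx ratr (rho g).

Definition gal_fixed m (X : 'M[E]_(m, d)) : Prop := forall g, gal_act g X = X.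

Lemma gal_actM g m n (Y : 'M[E]_(m, n)) (X : 'M[E]_(n, d)) :
  gal_act g (Y *m X) = map_mx g Y *m gal_act g X.
Proof. by rewrite /gal_act map_mxM mulmxA. Qed.

Lemma gal_act_ratr g m (a : 'M[rat]_(m, d)) :
  gal_act g (map_mx ratr a) = map_mx ratr (a *m rho g).
Proof. by rewrite /gal_act map_gal_ratr !ratv_alg map_mxM. Qed.

Lemma gal_actZ g m a (X : 'M[E]_(m, d)) : gal_act g (a *: X) = g a *: gal_act g X.
Proof. by rewrite /gal_act map_mxZ scalemxAl. Qed.

Lemma gal_act_sum g m I (r : seq I) (P : pred I) (Xs : I -> 'M[E]_(m, d)) :
  gal_act g (\sum_(i <- r | P i) Xs i) = \sum_(i <- r | P i) gal_act g (Xs i).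
Proof.
apply: (big_morph (@gal_act g m)) => [X Y|]; last by rewrite /gal_act map_mx0 mul0mx.
by rewrite /gal_act map_mxD mulmxDl.
Qed.

Lemma gal_act_comp g h m (X : 'M[E]_(m, d)) :
  gal_act g (gal_act h X) = gal_act (h * g)%g X.
Proof.
rewrite /gal_act map_mxM map_gal_ratr -mulmxA !ratv_alg -map_mxM -rho_mul -ratv_alg.
by congr (_ *m _); apply/matrixP => i j; rewrite !mxE galM // memvf.
Qed.

Lemma rho1 : rho 1%g = 1%:M.
Proof.
have rho11 := rho_mul 1%g 1%g; rewrite mulg1 in rho11.
by rewrite -[LHS]mul1mx -(mulVmx (rho_unit 1%g)) -mulmxA -rho11.
Qed.

Lemma gal_fixed_trace m (X : 'M[E]_(m, d)) : gal_fixed (\sum_h gal_act h X).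
Proof.
move=> g; rewrite gal_act_sum.
under eq_bigr => h _ do rewrite gal_act_comp.
by rewrite [RHS](reindex_inj (mulIg g)).
Qed.

(* Fixed vectors are not all annihilated by a nonzero W: by Dedekind's
   independence of the characters g, some trace of a e_i avoids ker W. *)
Lemma gal_fixed_witness (W : 'M[E]_d) :
  W != 0 -> exists x : 'rV[E]_d, gal_fixed x /\ x *m W != 0.
Proof.
case/matrix0Pn => i [j Wij].
pose coef g := (map_mx ratr ((delta_mx 0 i : 'rV[rat]_d) *m rho g) *m W) 0 j.
have coef1 : coef 1%g != 0.
  by rewrite /coef rho1 mulmx1 ratv_alg map_delta_mx -rowE mxE.
have [a _ coef_indep] := gal_independent_contra (P := predT) (erefl true) coef1.
exists (\sum_h gal_act h (a *: delta_mx 0 i)); split; first exact: gal_fixed_trace.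
apply: contraNneq coef_indep => x0.
have -> : \sum_(g | predT g) coef g * g a
    = ((\sum_h gal_act h (a *: (delta_mx 0 i : 'rV[E]_d))) *m W) 0 j.
  rewrite mulmx_suml summxE; apply: eq_bigr => h _; rewrite gal_actZ.
  by rewrite -(map_delta_mx (in_alg E)) -ratv_alg gal_act_ratr -scalemxAl mxE mulrC.
by rewrite x0 mxE.
Qed.

Lemma gal_fixed_free_rows k :
  (k <= d)%N -> exists B : 'M[E]_(k, d), row_free B /\ gal_fixed B.
Proof.
elim: k => [|k IHk] k_le_d.
  exists 0; split; first by rewrite /row_free -leqn0 rank_leq_row.
  by move=> g; rewrite flatmx0.
have [B [B_free B_fixed]] := IHk (ltnW k_le_d).
have coker_neq0 : cokermx B != 0.
  apply/eqP => coker0; move: (mxrank_coker B); rewrite coker0 mxrank0 (eqP B_free).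
  by move/eqP; rewrite eq_sym subn_eq0 leqNgt k_le_d.
have [x [x_fixed xB]] := gal_fixed_witness coker_neq0.
have x_notin_B : ~~ (x <= B)%MS by rewrite submxE.
have xB_fixed : gal_fixed (col_mx x B).
  by move=> g; rewrite /gal_act map_col_mx mul_col_mx -!/(gal_act _ _) x_fixed B_fixed.
exists (col_mx x B); split; last exact: xB_fixed.
rewrite /row_free eqn_leq rank_leq_row /=.
have : (B < col_mx x B)%MS.
  rewrite ltmxE -addsmxE addsmxSr /=; apply: contra x_notin_B.
  by rewrite -addsmxE addsmx_sub => /andP[].
by move/rank_ltmx; rewrite (eqP B_free).
Qed.

Lemma gal_fixed_basis : exists B : 'M[E]_d, B \in unitmx /\ gal_fixed B.
Proof.
have [B [B_free B_fixed]] := gal_fixed_free_rows (leqnn d).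
by exists B; rewrite -row_free_unit.
Qed.

Lemma gal_fixedP (B : 'M[E]_d) m (Y : 'M[E]_(m, d)) :
  B \in unitmx -> gal_fixed B ->
  gal_fixed Y <-> exists A : 'M[rat]_(m, d), Y = map_mx ratr A *m B.
Proof.
move=> B_unit B_fixed; split=> [Y_fixed|[A ->] g]; last first.
  by rewrite gal_actM map_gal_ratr B_fixed.
have [A YB_rat] : exists A : 'M[rat]_(m, d), Y *m invmx B = map_mx ratr A.
  apply: gal_fixed_rat_mx => g.
  have gYB : map_mx g (Y *m invmx B) *m B = Y.
    by rewrite -{2}(B_fixed g) -gal_actM mulmxKV // Y_fixed.
  by rewrite -{2}gYB mulmxK.
by exists A; rewrite -YB_rat mulmxKV.
Qed.

End GaloisDescent.

(* f commutes with the twisted Galois action, since rho g maps V_l onto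
   V_(g l) and g(l) is the image of the eigenvalue l. *)
Lemma eigen_map_gal_act (E : splittingFieldType rat) d (rho : gal_of {:E} -> 'M[rat]_d)
    (V : E -> 'M[rat]_d) (s : seq E) (F : 'M[E]_d) :
  (\sum_(l <- s) V l :=: 1%:M)%MS ->
  (forall g l, (V l *m rho g == V (g l))%MS) ->
  (forall l x, (x <= V l)%MS -> ratv E x *m F = l *: ratv E x) ->
  forall g m (X : 'M[E]_(m, d)), gal_act rho g (X *m F) = gal_act rho g X *m F.
Proof.
move=> Vsum rhoV F_eigen g.
have gal_act_rowF (x : 'rV[E]_d) : gal_act rho g (x *m F) = gal_act rho g x *m F.
  elim/(span_ind Vsum): x => [|u v Hu Hv|a u Hu|l x Vx].
  - by rewrite mul0mx /gal_act map_mx0 !mul0mx.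
  - by rewrite mulmxDl /gal_act !map_mxD !mulmxDl -!/(gal_act _ _ _) Hu Hv.
  - by rewrite -scalemxAl !gal_actZ Hu scalemxAl.
  have Vgl : (x *m rho g <= V (g l))%MS by rewrite -(eqmxP (rhoV g l)) submxMr.
  by rewrite (F_eigen _ _ Vx) gal_actZ /ratv gal_act_ratr (F_eigen _ _ Vgl).
move=> m X; apply/row_matrixP => i; rewrite !rowE.
have delta_fixed : map_mx g (delta_mx 0 i : 'rV[E]_m) = delta_mx 0 i by apply: map_delta_mx.
rewrite -{1 2}delta_fixed [RHS]mulmxA -!gal_actM.
by rewrite (mulmxA (delta_mx 0 i)) gal_act_rowF.

Qed.

Section DescendedForm.
Variables (E : splittingFieldType rat) (d : nat) (c : 'I_d -> 'I_d -> 'rV[rat]_d).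
Variables (rho : gal_of {:E} -> 'M[rat]_d) (B F : 'M[E]_d).
Hypothesis rho_br :
  forall g (x y : 'rV[rat]_d), lie_br c (x *m rho g) (y *m rho g) = lie_br c x y *m rho g.
Hypotheses (B_unit : B \in unitmx) (B_fixed : gal_fixed rho B).
Hypothesis F_gal : forall g m (X : 'M[E]_(m, d)), gal_act rho g (X *m F) = gal_act rho g X *m F.

Lemma in_QspanP (u : 'rV[E]_d) : in_Qspan B u <-> gal_fixed rho u.
Proof. by rewrite (gal_fixedP _ B_unit B_fixed). Qed.

Lemma gal_act_br g (x y : 'rV[E]_d) :
  gal_act rho g (lie_br c x y) = lie_br c (gal_act rho g x) (gal_act rho g y).
Proof. by rewrite /gal_act lie_br_map lie_br_mulmx_rat. Qed.

Lemma descended_rational_form : rational_form c B.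
Proof.
split=> // u v /in_QspanP u_fixed /in_QspanP v_fixed; apply/in_QspanP => g.
by rewrite gal_act_br u_fixed v_fixed.
Qed.

Lemma descended_stabilizes : F \in unitmx -> stabilizes B F.
Proof.
move=> F_unit; split=> [u /in_QspanP u_fixed|v /in_QspanP v_fixed].
  by apply/in_QspanP => g; rewrite F_gal u_fixed.
exists (v *m invmx F); split; last by rewrite mulmxKV.
apply/in_QspanP => g; apply: (can_inj (mulmxK F_unit)).
by rewrite /= -F_gal mulmxKV.
Qed.

Lemma descended_matrix : exists A : 'M[rat]_d, B *m F = map_mx ratr A *m B.
Proof.
by apply/(gal_fixedP _ B_unit B_fixed) => g; rewrite F_gal B_fixed.
Qed.

End DescendedForm.

Section IntegerLikeCharPoly.
Variables (n : nat) (A : 'M[rat]_n).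
Local Notation p := (map_poly ratr (char_poly A) : {poly algC}).

Lemma char_poly_factor : exists rs : seq algC, p = \prod_(z <- rs) ('X - z%:P).
Proof.
have [rs ->] := closed_field_poly_normal p; exists rs.
by rewrite (monicP _) ?scale1r // map_monic char_poly_monic.
Qed.

Lemma char_poly_over_int :
  (forall z, root p z -> z \in Aint) -> char_poly A \is a polyOver Num.int.
Proof.
move=> roots_int; have [rs p_split] := char_poly_factor.
have p_Aint : p \is a polyOver Aint.
  rewrite p_split big_seq; apply: rpred_prod => z z_rs.
  by rewrite rpredB ?polyOverX ?polyOverC ?roots_int // p_split root_prod_XsubC.
apply/polyOverP => i; rewrite -Cint_rat; apply: Cint_rat_Aint; first exact: Crat_rat.
by rewrite -coef_map; exact: (polyOverP p_Aint).
Qed.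

(* Roots that are algebraic units make det A, a rational integer whose
   inverse is also an algebraic integer, equal to +1 or -1. *)
Lemma det_sign_of_unit_roots :
  (forall z, root p z -> alg_unit z) -> \det A = 1 \/ \det A = -1.
Proof.
move=> roots_unit; have [rs p_split] := char_poly_factor.
have p0_det : p`_0 = (-1) ^+ n * ratr (\det A).
  by rewrite coef_map char_poly_det /= rmorphM rmorph_sign.
have p0_prod : p`_0 = \prod_(z <- rs) (- z).
  rewrite -horner_coef0 p_split horner_prod.
  by apply: eq_bigr => z _; rewrite hornerXsubC sub0r.
have det_int : \det A \in Num.int.
  have charA_int : char_poly A \is a polyOver Num.int.
    by apply: char_poly_over_int => z /roots_unit/andP[/andP[_ ?] _].
  have := polyOverP charA_int 0%N; rewrite char_poly_det => sign_det_int.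
  by rewrite -[\det A](signrMK n) rpredM ?rpredX ?rpredN ?rpred1.
have det_neq0 : \det A != 0.
  apply/eqP => det0; have := roots_unit 0.
  by rewrite /root horner_coef0 p0_det det0 rmorph0 mulr0 /alg_unit !eqxx => /(_ isT).
have detV_int : (\det A)^-1 \in Num.int.
  rewrite -Cint_rat; apply: Cint_rat_Aint; first exact: Crat_rat.
  have -> : ratr ((\det A)^-1) = (-1) ^+ n * (p`_0)^-1 :> algC.
    have ratrV : ratr ((\det A)^-1) = (ratr (\det A))^-1 :> algC by exact: fmorphV.
    by rewrite ratrV p0_det [in RHS]invfM invr_sign signrMK.
  rewrite rpredM ?rpredX ?rpredN ?rpred1 //.
  rewrite p0_prod -prodfV big_seq; apply: rpred_prod => z z_rs; rewrite invrN rpredN.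
  have /roots_unit/andP[_ //] : root p z by rewrite p_split root_prod_XsubC.
have det_norm : `|\det A| = 1.
  have := norm_intr_ge1 detV_int (invr_neq0 det_neq0).
  rewrite normfV invf_ge1 ?normr_gt0 // => le_det1.
  by apply/eqP; rewrite eq_le le_det1 norm_intr_ge1.
by have := intrEsign det_int; rewrite det_norm mulr1; case: (_ < 0) => ->; [right|left].
Qed.

Lemma anosov_mx_of_unit_roots :
  (forall z, root p z -> alg_unit z && (`|z| != 1)) -> anosov_mx A.
Proof.
move=> roots_ok; split; [|split].
- by apply: char_poly_over_int => z /roots_ok/andP[/andP[/andP[_ ?] _] _].
- by apply: det_sign_of_unit_roots => z /roots_ok/andP[].
- by move=> z /roots_ok/andP[].
Qed.

End IntegerLikeCharPoly.

(* If f is conjugate to a rational matrix A (B F = A B), every complex root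
   of char_poly A is iota(l) for an eigenvalue l of f: f is annihilated by
   q = prod_(V_l != 0) (X - l), so iota(q) kills the minimal polynomial of A. *)
Lemma conj_char_poly_roots (E : splittingFieldType rat) (iota : {rmorphism E -> algC})
    d (V : E -> 'M[rat]_d) (s : seq E) (F B : 'M[E]_d) (A : 'M[rat]_d) :
  (forall l, l \notin s -> V l = 0) -> (\sum_(l <- s) V l :=: 1%:M)%MS ->
  (forall l x, (x <= V l)%MS -> ratv E x *m F = l *: ratv E x) ->
  B \in unitmx -> B *m F = map_mx ratr A *m B ->
  forall z : algC, root (map_poly ratr (char_poly A)) z -> exists2 l, V l != 0 & z = iota l.
Proof.
case: d => [|n] in V F B A * => V_supp Vsum F_eigen B_unit BF z.
  by rewrite /char_poly det_mx00 rmorph1 (negbTE (root1 z)).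
pose q := \prod_(l <- s | V l != 0) ('X - l%:P).
have q_F : horner_mx F q = 0.
  apply/row_matrixP => i; rewrite row0 rowE.
  elim/(span_ind Vsum): (delta_mx 0 i) => [|u v Hu Hv|a u Hu|l x Vx].
  - by rewrite mul0mx.
  - by rewrite mulmxDl Hu Hv addr0.
  - by rewrite -scalemxAl Hu scaler0.
  have [Vl0|Vl_neq0] := eqVneq (V l) 0.
    by move: Vx; rewrite Vl0 submx0 => /eqP ->; rewrite /ratv ratv_alg map_mx0 mul0mx.
  have ls : l \in s by apply: contraNT Vl_neq0 => /V_supp ->.
  rewrite /q (big_rem l ls) /= Vl_neq0 rmorphM /= rmorphB /= horner_mx_X horner_mx_C.
  by rewrite -mulmxE mulmxA mulmxBr (F_eigen _ _ Vx) mul_mx_scalar subrr mul0mx.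
have A_conj : map_mx iota (B *m F *m invmx B) = map_mx ratr A.
  by rewrite BF mulmxK //; apply/matrixP => i j; rewrite !mxE fmorph_rat.
rewrite map_char_poly -root_mxminpoly => z_root.
have : root (map_poly iota q) z.
  apply: root_dvdp z_root; apply: mxminpoly_min.
  by rewrite -A_conj -map_horner_mx horner_mx_uconj // q_F mulmx0 mul0mx map_mx0.
rewrite rmorph_prod -big_filter /=.
under eq_bigr => l _ do rewrite map_polyXsubC.
rewrite -(big_map iota xpredT (fun w => 'X - w%:P)) root_prod_XsubC.
by case/mapP => l; rewrite mem_filter => /andP[Vl _] ->; exists l.
Qed.

Lemma descended_anosov_form (E : splittingFieldType rat) (iota : {rmorphism E -> algC})
    d (c : 'I_d -> 'I_d -> 'rV[rat]_d) (V : E -> 'M[rat]_d) (s : seq E)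
    (F B : 'M[E]_d) (A : 'M[rat]_d) :
  (forall l, l \notin s -> V l = 0) -> (\sum_(l <- s) V l :=: 1%:M)%MS ->
  (forall l x, (x <= V l)%MS -> ratv E x *m F = l *: ratv E x) ->
  lie_autE c F -> B \in unitmx -> B *m F = map_mx ratr A *m B ->
  (forall l, V l != 0 -> alg_unit (iota l) && (`|iota l| != 1)) ->
  anosov_form c B.
Proof.
move=> V_supp Vsum F_eigen [F_unit F_br] B_unit BF eigen_ok.
have A_B (x : 'rV[rat]_d) : ratv E (x *m A) *m B = ratv E x *m B *m F.
  by rewrite /ratv !ratv_alg map_mxM -!ratv_alg -mulmxA BF mulmxA.
exists A; split; [|split].
- rewrite -(map_unitmx (in_alg E)) -ratv_alg.
  by rewrite -[map_mx _ A](mulmxK B_unit) -BF !unitmx_mul B_unit F_unit unitmx_inv B_unit.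
- by move=> a b e ab_e; rewrite !A_B F_br ab_e.
apply: anosov_mx_of_unit_roots => z /(conj_char_poly_roots iota V_supp Vsum F_eigen B_unit BF).
by case=> l /eigen_ok l_ok ->.
Qed.

Theorem corollary2p8
  (* E : a finite Galois extension of Q, embedded in C via iota *)
  (E : splittingFieldType rat) (iota : {rmorphism E -> algC})
  (* n^Q : a d-dimensional rational Lie algebra with structure constants c *)
  (d : nat) (c : 'I_d -> 'I_d -> 'rV[rat]_d) (Hlie : is_lie c)
  (* the decomposition n^Q = (+)_{lambda in E \ 0} V_lambda *)
  (V : E -> 'M[rat]_d) (s : seq E)
  (Hs : uniq s) (Hs0 : 0 \notin s) (HV0 : forall l, l \notin s -> V l = 0)
  (Hsum : (\sum_(l <- s) V l :=: 1%:M)%MS)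
  (Hdirect : mxdirect (\sum_(l <- s) V l))
  (Hbr : forall (l m : E) (x y : 'rV[rat]_d),
      (x <= V l)%MS -> (y <= V m)%MS -> (lie_br c x y <= V (l * m)%R)%MS)
  (* the Galois representation rho *)
  (rho : gal_of {:E} -> 'M[rat]_d)
  (Hrho_aut : forall sg, lie_aut c (rho sg))
  (Hrho_hom : forall sg tau, rho (sg * tau)%g = rho sg *m rho tau)
  (Hrho_V : forall sg l, (V l *m rho sg == V (sg l))%MS)
  (* f : n^E -> n^E, E-linear, f(X) = lambda X for X in V_lambda *)
  (F : 'M[E]_d)
  (HF : forall (l : E) (x : 'rV[rat]_d),
      (x <= V l)%MS -> ratv E x *m F = l *: ratv E x) :
  lie_autE c F /\
  exists B : 'M[E]_d,
    rational_form c B /\ stabilizes B F /\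
    ((forall l : E, V l != 0 -> alg_unit (iota l) && (`|iota l| != 1)) ->
     anosov_form c B).
Proof.
have rho_unit g : rho g \in unitmx by have [] := Hrho_aut g.
have rho_br g : forall x y, lie_br c (x *m rho g) (y *m rho g) = lie_br c x y *m rho g.
  by have [] := Hrho_aut g.
have F_aut : lie_autE c F.
  by split; [exact: (eigen_map_unit Hs0 HV0 Hsum HF) | exact: (eigen_map_br Hsum HF Hbr)].
have F_gal := eigen_map_gal_act Hsum Hrho_V HF.
have [B [B_unit B_fixed]] := gal_fixed_basis Hrho_hom rho_unit.
split=> //; exists B; split; first exact: descended_rational_form rho_br B_unit B_fixed.
split; first exact: descended_stabilizes B_unit B_fixed F_gal F_aut.1.
have [A BF] := descended_matrix B_unit B_fixed F_gal.
exact: descended_anosov_form HV0 Hsum HF F_aut B_unit BF.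
Qed.
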